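(* Suppose that $G$ is a finite solvable group acted on by automorphisms by an elementary abelian $p$-group $A$ with $|A|\geq p^3$. If this action is good and $C_G(a)$ is abelian for every nonidentity $a\in A$, then $G$ is abelian.
   Context: If a group $A$ acts on a group $G$ by automorphisms, the action is called good if $H=[H,B]C_H(B)$ for every subgroup $B\le A$ and every $B$-invariant subgroup $H\le G$. *)

From mathcomp Require Import all_boot all_fingroup all_solvable.
Set Implicit Arguments. Unset Strict Implicit. Unset Printing Implicit Defensive.
Import GroupScope.

Section GoodAction.
Variables (aT gT : finGroupType) (A : {group aT}) (G : {group gT}).
Variable to : groupAction A G.

Definition actcomm (H : {set gT}) (B : {set aT}) : {set gT} :=
  <<[set x^-1 * to x b | x in H, b in B]>>.

Definition good_action : Prop :=
  forall (B : {group aT}) (H : {group gT}),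
    B \subset A -> H \subset G -> [acts B, on H | to] ->
    H :=: actcomm H B * 'C_(H | to)(B).
End GoodAction.

From mathcomp Require Import all_boot all_fingroup all_solvable ssralg.
Set Implicit Arguments. Unset Strict Implicit. Unset Printing Implicit Defensive.
Import GroupScope GRing.Theory.

(* Let E <= A be elementary abelian of order p^2 and K a solvable E-invariant
   subgroup of G; then K = <C_K(e) | e in E^#>.  By induction on |K| the
   subgroup L so generated contains K', and goodness makes every e in E^# act
   fixed-point-freely on the abelian section K/L.  As the orbit sum of x over
   any nontrivial D <= E is then trivial in K/L, comparing the sum over E with
   the sums over its p + 1 subgroups of order p shows that K/L has exponent p;
   a p-group acting on the p-group K/L without fixed points forces K = L.
   Now take A0 <= A of order p^3.  Applied to C_G(a) and a complement of <a>
   in A0, this writes each C_G(a), a in A0^#, as generated by centralizers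
   C_G(U) of subgroups U of order p^2 of A0.  Any two such U meet in some
   g != 1, so C_G(U) and C_G(V) commute inside the abelian C_G(g): these
   centralizers generate an abelian group, which contains G. *)

Section ElementaryAbelian.

Variables (gT : finGroupType) (p : nat) (A0 : {group gT}).
Hypothesis p_pr : prime p.

Lemma p2Elem_meet (U V : {group gT}) :
  #|A0| = (p ^ 3)%N -> U \in 'E_p^2(A0) -> V \in 'E_p^2(A0) -> U :&: V != 1.
Proof.
move=> oA0 /pnElemPcard[sUA _ oU] /pnElemPcard[sVA _ oV].
have : (p ^ 4 <= p ^ 3 * #|U :&: V|)%N.
  rewrite -[4]/(2 + 2) expnD -{1}oU -oV mul_cardG -oA0 leq_mul2r.
  by rewrite subset_leq_card ?mul_subG ?orbT.
apply: contraTneq => ->; rewrite cards1 muln1 leq_exp2l ?prime_gt1 //.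
Qed.

Lemma join_cycle_p2Elem e f :
  p.-abelem A0 -> e \in A0^# -> f \in A0 -> f \notin <[e]> ->
  (<[e]> <*> <[f]>)%G \in 'E_p^2(A0).
Proof.
move=> abelA0 /setD1P[nte Ae] Af e'f.
have ntf : f != 1 by apply: contraNneq e'f => ->; apply: group1.
have [oe of_] := (abelem_order_p abelA0 Ae nte, abelem_order_p abelA0 Af ntf).
have tiEF : <[e]> :&: <[f]> = 1.
  by rewrite setIC prime_TIg ?cycle_subG // -orderE of_.
rewrite pnElemE // !inE join_subG !cycle_subG Ae Af /=.
rewrite (abelemS _ abelA0) ?join_subG ?cycle_subG ?Ae ?Af //= comm_joingE.
  by rewrite TI_cardMg // -!orderE oe of_.
by apply: centC; rewrite (sub_abelian_cent2 (abelem_abelian abelA0)) ?cycle_subG.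
Qed.

End ElementaryAbelian.

Section GroupActionFacts.

Variables (aT gT : finGroupType) (A : {group aT}) (G : {group gT}).
Variable to : groupAction A G.
Implicit Types (B : {group aT}) (K : {group gT}).

Lemma acts_bigcup (I : finType) (P : pred I) (F : I -> {set gT}) B :
  B \subset A -> (forall i, P i -> [acts B, on F i | to]) ->
  [acts B, on \bigcup_(i | P i) F i | to].
Proof.
move=> sBA actsF; apply: (big_ind (fun S => [acts B, on S | to])) => // [|S T].
  by apply/subsetP=> b Bb; rewrite !inE (subsetP sBA) // sub0set.
exact: actsU.
Qed.

Lemma acts_der1 B K :
  B \subset A -> K \subset G -> [acts B, on K | to] -> [acts B, on K^`(1) | to].
Proof.
move=> sBA sKG actsK; apply: acts_gen.
  by rewrite -gen_subG (subset_trans (der_sub 1 K) sKG).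
apply/subsetP=> b Bb; rewrite !inE (subsetP sBA) //=.
apply/subsetP=> _ /imset2P[x y Kx Ky ->].
rewrite inE gactR ?(subsetP sKG) ?(subsetP sBA) //.
by apply: imset2_f; rewrite (acts_act actsK Bb).
Qed.

Lemma acts_gacent1 B (S : {set gT}) e :
  e \in A -> B \subset 'C[e] -> [acts B, on S | to] ->
  [acts B, on 'C_(S | to)[e] | to].
Proof.
move=> Ae cBe actsS; rewrite -gacent_cycle //.
have nBe : B \subset 'N(<[e]>) by rewrite (subset_trans cBe) // -cent_cycle cent_sub.
by rewrite -(setIidPl nBe) acts_subnorm_subgacent ?cycle_subG.
Qed.

Lemma gact_prod (I : Type) (r : seq I) (P : pred I) (F : I -> gT) a :
  a \in A -> (forall i, P i -> F i \in G) ->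
  to (\prod_(i <- r | P i) F i) a = \prod_(i <- r | P i) to (F i) a.
Proof.
move=> Aa; apply: (@big_morph_in _ _ (mem G) (to^~ a)) => [x y||x y|].
- exact: groupM.
- exact: group1.
- exact: gactM.
- exact: gact1.
Qed.

Definition fix_coset (H N : {set gT}) (B : {set aT}) :=
  [set y in H | [forall b in B, y^-1 * to y b \in N]].

Lemma group_set_fix_coset B (H N : {group gT}) :
  B \subset A -> H \subset G -> H \subset 'N(N) -> group_set (fix_coset H N B).
Proof.
move=> sBA sHG nNH; apply/group_setP; split.
  rewrite inE group1; apply/forall_inP=> b Bb.
  by rewrite gact1 ?(subsetP sBA) // mulVg group1.
move=> y z /setIdP[Hy /forall_inP fixy] /setIdP[Hz /forall_inP fixz].
rewrite inE groupM //; apply/forall_inP=> b Bb.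
rewrite gactM ?(subsetP sBA) ?(subsetP sHG) // invMg.
have -> : z^-1 * y^-1 * (to y b * to z b) = (y^-1 * to y b) ^ z * (z^-1 * to z b).
  by rewrite conjgE !mulgA mulgK.
by rewrite groupM ?fixz // memJ_norm ?fixy ?(subsetP nNH).
Qed.

Lemma acts_fix_coset B (H N : {set gT}) :
  abelian B -> B \subset A -> H \subset G ->
  [acts B, on H | to] -> [acts B, on N | to] -> [acts B, on fix_coset H N B | to].
Proof.
move=> cBB sBA sHG actsH actsN; apply/subsetP=> b Bb.
have Ab := subsetP sBA b Bb; rewrite !inE Ab; apply/subsetP=> y.
rewrite !inE (acts_act actsH Bb) => /andP[Hy /forall_inP fixy].
rewrite Hy; apply/forall_inP=> c Bc; have Ac := subsetP sBA c Bc.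
have Gy := subsetP sHG y Hy.
rewrite -actMin // (centsP cBB b Bb c Bc) actMin //.
rewrite -gactV // -gactM ?groupV ?gact_stable //.
by rewrite (acts_act actsN Bb) fixy.
Qed.

Lemma fix_coset_cycle (H : {set gT}) (N : {group gT}) e x :
  e \in 'N(N | to) -> x \in H -> x \in G ->
  x^-1 * to x e \in N -> x \in fix_coset H N <[e]>.
Proof.
move=> nNe Hx Gx fixx.
pose T := [set b in 'N(N | to) | x^-1 * to x b \in N].
have groupT : group_set T.
  apply/group_setP; split; first by rewrite inE group1 act1 mulVg group1.
  move=> b c /setIdP[nNb fixb] /setIdP[nNc fixc].
  have [Ab Ac] := (astabs_dom nNb, astabs_dom nNc).
  rewrite inE groupM //= actMin //.
  have -> : x^-1 * to (to x b) c = (x^-1 * to x c) * to (x^-1 * to x b) c.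
    by rewrite gactM ?groupV ?gact_stable // gactV // !mulgA mulgK.
  by rewrite groupM // (astabs_act _ nNc).
have sET : <[e]> \subset Group groupT by rewrite cycle_subG inE nNe.
rewrite inE Hx; apply/forall_inP=> b /(subsetP sET).
by rewrite inE => /andP[].
Qed.

Lemma setact_lcoset (L : {group gT}) b x :
  L \subset G -> b \in 'N(L | to) -> x \in G -> to^* (x *: L) b = to x b *: L.
Proof.
move=> sLG nLb Gx; have Ab := astabs_dom nLb.
apply/eqP; rewrite eqEcard card_setact !card_lcoset leqnn andbT.
apply/subsetP=> _ /imsetP[_ /lcosetP[y Ly ->] ->].
by rewrite gactM ?(subsetP sLG y Ly) // mem_lcoset mulKg (astabs_act _ nLb).
Qed.

Section FixfreeQuotient.

Variables (p : nat) (E : {group aT}) (K L : {group gT}).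
Hypotheses (Ep2E : E \in 'E_p^2(A)) (sKG : K \subset G).
Hypotheses (actsK : [acts E, on K | to]) (actsL : [acts E, on L | to]).
Hypotheses (sK'L : K^`(1) \subset L) (sLK : L \subset K).
Hypothesis fixfree :
  forall e y, e \in E^# -> y \in K -> y^-1 * to y e \in L -> y \in L.

Let sEA : E \subset A. Proof. by case/pnElemP: Ep2E. Qed.
Let nLK : K \subset 'N(L). Proof. exact: normal_norm (sub_der1_normal sK'L sLK). Qed.
Let abKL : abelian (K / L). Proof. exact: sub_der1_abelian. Qed.
(* Viewing the abelian section K/L as an additive group lets sums over E be
   reindexed and regrouped freely. *)
Let phi x := FiniteModule.fmod abKL (coset L x).

Let phiM : {in K &, {morph phi : x y / x * y >-> (x + y)%R}}.
Proof.
move=> x y Kx Ky; rewrite /phi morphM ?(subsetP nLK) //.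
by rewrite FiniteModule.fmodM ?mem_quotient.
Qed.

Let phi_eq0 x : x \in K -> (phi x == 0%R) = (x \in L).
Proof.
move=> Kx; apply/eqP/idP=> [phix0 | Lx]; last first.
  by rewrite /phi coset_id // FiniteModule.fmod1.
apply: coset_idr; first exact: (subsetP nLK).
by rewrite -(FiniteModule.fmodK abKL (mem_quotient L Kx)) -/(phi x) phix0.
Qed.

Let phiX x n : x \in K -> phi (x ^+ n) = (phi x *+ n)%R.
Proof.
move=> Kx; rewrite /phi morphX ?(subsetP nLK) //.
by rewrite FiniteModule.fmodX ?mem_quotient.
Qed.

Let phi_prod {I : Type} {r : seq I} {P : pred I} {F : I -> gT} :
  (forall i, P i -> F i \in K) ->
  phi (\prod_(i <- r | P i) F i) = (\sum_(i <- r | P i) phi (F i))%R.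
Proof.
apply: (@big_morph_in _ _ (mem K) phi) => [x y||x y|].
- exact: groupM.
- exact: group1.
- exact: phiM.
- by apply/eqP; rewrite phi_eq0.
Qed.

Let sum_phi_orbit (D : {group aT}) x :
  D \subset E -> D :!=: 1 -> x \in K -> (\sum_(d in D) phi (to x d) = 0)%R.
Proof.
move=> sDE ntD Kx; have [e De nte] := trivgPn _ ntD.
have DE d : d \in D -> d \in E := subsetP sDE d.
have DA d : d \in D -> d \in A := fun Dd => subsetP sEA d (DE d Dd).
have Kxd d : d \in D -> to x d \in K by move=> Dd; rewrite (acts_act actsK (DE d Dd)).
pose y := \prod_(d in D) to x d.
have Ky : y \in K by apply: group_prod.
have Kye : to y e \in K by rewrite (acts_act actsK (DE e De)).
have phi_ye : phi (to y e) = phi y.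
  rewrite gact_prod ?DA // => [|d Dd]; last exact: subsetP sKG _ (Kxd d Dd).
  have Kxde d : d \in D -> to (to x d) e \in K.
    by move=> Dd; rewrite (acts_act actsK (DE e De)) Kxd.
  rewrite /y (phi_prod Kxde) (phi_prod Kxd) [RHS](reindex_inj (mulIg e)) /=.
  by apply: eq_big => [d|d Dd]; rewrite ?groupMr // actMin ?DA.
have Ly : y \in L.
  apply: (fixfree (e := e)); rewrite ?inE ?nte ?DE //.
  rewrite -phi_eq0 ?groupM ?groupV // phiM ?groupV // phi_ye.
  by rewrite -phiM ?groupV // mulVg phi_eq0.
by rewrite -phi_prod //; apply/eqP; rewrite phi_eq0.
Qed.

Let p_pr : prime p. Proof. exact: pnElem_prime Ep2E. Qed.
Let abelE : p.-abelem E. Proof. by case/pnElemPcard: Ep2E. Qed.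

Let ntE : E :!=: 1.
Proof.
rewrite -cardG_gt1 (card_pnElem Ep2E) -{1}(expn0 p).
by rewrite ltn_exp2l ?prime_gt1.
Qed.

Let cycle_p1Elem d : d \in E^# -> <[d]>%G \in 'E_p^1(E).
Proof.
case/setD1P=> ntd Ed; rewrite p1ElemE // !inE cycle_subG Ed /=.
by rewrite -orderE (abelem_order_p abelE).
Qed.

Let cycle_eq_p1Elem X d :
  X \in 'E_p^1(E) -> (d \in E^#) && (<[d]>%G == X) = (d \in X^#).
Proof.
move=> EpX; have [sXE _ oX] := pnElemPcard EpX; rewrite expn1 in oX.
apply/andP/idP=> [[/setD1P[ntd _] /eqP <-] | X'd]; first by rewrite !inE ntd cycle_id.
have /setD1P[ntd Xd] := X'd; rewrite !inE ntd (subsetP sXE) //=.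
by split=> //; apply/eqP; apply: val_inj; rewrite /= -(nt_gen_prime _ X'd) ?oX.
Qed.

(* E^# is the disjoint union of the X^# over the p + 1 subgroups X of order p
   of E, so 0 = (orbit sum over E) = phi x + (p + 1) (- phi x). *)
Let expg_mem x : x \in K -> x ^+ p \in L.
Proof.
move=> Kx; rewrite -phi_eq0 ?groupX // phiX //.
have sum_line X : X \in 'E_p^1(E) -> (\sum_(d in X^#) phi (to x d) = - phi x)%R.
  move=> EpX; have [sXE _ oX] := pnElemPcard EpX.
  have ntX : X :!=: 1 by rewrite -cardG_gt1 oX expn1 prime_gt1.
  have := sum_phi_orbit sXE ntX Kx; rewrite (big_setD1 1) ?group1 //= act1.
  by move/eqP; rewrite addrC addr_eq0 => /eqP.
have := sum_phi_orbit (subxx E) ntE Kx.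
rewrite (big_setD1 1) ?group1 //= act1.
rewrite (partition_big (fun d => <[d]>%G) (mem 'E_p^1(E))) => [|d]; last first.
  exact: cycle_p1Elem.
rewrite (eq_bigr (fun _ => - phi x)%R) => [|X EpX]; last first.
  by rewrite -(sum_line X EpX); apply: eq_bigl => d; rewrite cycle_eq_p1Elem.
rewrite sumr_const (card_p1Elem_p2Elem Ep2E) mulNrn mulrS opprD addrA subrr add0r.
by move/eqP; rewrite oppr_eq0.
Qed.

Lemma fixfree_quotient_sub : K \subset L.
Proof.
have [e Ee nte] := trivgPn _ ntE; have E'e : e \in E^# by rewrite !inE nte.
have sCE : <[e]> \subset E by rewrite cycle_subG.
have nLC b : b \in <[e]> -> b \in 'N(L | to).
  by move/(subsetP sCE); apply: (subsetP actsL).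
have actsC : [acts <[e]>, on lcosets L K | to^*].
  apply/subsetP=> b Cb; rewrite !inE (astabs_dom (nLC b Cb)).
  apply/subsetP=> _ /lcosetsP[x Kx ->]; rewrite inE; apply/lcosetsP.
  exists (to x b); first by rewrite (acts_act actsK (subsetP sCE b Cb)).
  exact: setact_lcoset (subset_trans sLK sKG) (nLC b Cb) (subsetP sKG x Kx).
have fixC : 'Fix_(lcosets L K | to^*)(<[e]>) = [set gval L].
  apply/setP=> C; rewrite in_setI in_set1.
  apply/andP/eqP=> [[/lcosetsP[x Kx ->] /afixP fixCx] | ->].
    have := etrans (esym (setact_lcoset (subset_trans sLK sKG) (nLC e (cycle_id e))
              (subsetP sKG x Kx))) (fixCx e (cycle_id e)).
    move/lcoset_eqP; rewrite mem_lcoset => /(fixfree E'e Kx) Lx.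
    by rewrite lcoset_id.
  split; first by apply/lcosetsP; exists 1; rewrite ?mul1g.
  by apply/afixP=> b Cb; apply: astabs_setact; apply: nLC.
have pC : p.-group <[e]> := pgroupS sCE (abelem_pgroup abelE).
have := pgroup_fix_mod pC actsC; rewrite fixC cards1 card_lcosets => modKL.
have pKL : p.-group (K / L).
  rewrite -pnat_exponent (pnat_dvd _ (pnat_id p_pr)) //.
  apply/exponentP=> _ /morphimP[x Nx Kx ->].
  by rewrite -morphX //= coset_id ?expg_mem.
suff /eqP : #|K : L| = 1%N by rewrite indexg_eq1.
rewrite -card_quotient // (pnat_1 pKL) // p'natE // card_quotient //.
by rewrite /dvdn modKL modn_small ?prime_gt1.
Qed.

End FixfreeQuotient.

Section Good.

Hypothesis goodA : good_action to.

Lemma good_fix_coset B (H N : {group gT}) x :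
  abelian B -> B \subset A -> H \subset G -> [acts B, on H | to] ->
  H \subset 'N(N) -> [acts B, on N | to] ->
  x \in fix_coset H N B -> x \in N * 'C_(H | to)(B).
Proof.
move=> cBB sBA sHG actsH nNH actsN.
pose S := Group (group_set_fix_coset sBA sHG nNH).
have sSH : S \subset H by apply/subsetP=> y /setIdP[].
have defS := goodA sBA (subset_trans sSH sHG) (acts_fix_coset cBB sBA sHG actsH actsN).
move=> Sx; have: x \in S by []; rewrite defS; apply: subsetP; rewrite mulgSS ?setSI //.
rewrite gen_subG; apply/subsetP=> _ /imset2P[y b /setIdP[_ /forall_inP fixy] Bb ->].
exact: fixy.
Qed.

Lemma good_fixfree_quotient e (K L : {group gT}) y :
  e \in A -> K \subset G -> [acts <[e]>, on K | to] -> [acts <[e]>, on L | to] ->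
  K \subset 'N(L) -> 'C_(K | to)[e] \subset L ->
  y \in K -> y^-1 * to y e \in L -> y \in L.
Proof.
move=> Ae sKG actsK actsL nLK sCL Ky fixy.
have nLe : e \in 'N(L | to) := subsetP actsL e (cycle_id e).
have := good_fix_coset (cycle_abelian e) _ sKG actsK nLK actsL.
rewrite cycle_subG gacent_cycle // => /(_ y Ae).
move/(_ (fix_coset_cycle nLe Ky (subsetP sKG y Ky) fixy)).
by apply: subsetP; rewrite -{2}(mulGid L) mulgS.
Qed.

Lemma good_gen_gacent1 p (E : {group aT}) (K : {group gT}) :
  E \in 'E_p^2(A) -> K \subset G -> [acts E, on K | to] -> solvable K ->
  <<\bigcup_(e in E^#) 'C_(K | to)[e]>> = K.
Proof.
move=> Ep2E; have [sEA abelE _] := pnElemPcard Ep2E.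
have cEE := abelem_abelian abelE.
have [n leKn] := ubnP #|K|; elim: n K leKn => // n IHn K leKn sKG actsK solK.
set L := <<_>>; have sLK : L \subset K.
  by rewrite gen_subG; apply/bigcupsP=> e _; apply: subsetIl.
apply/eqP; rewrite eqEsubset sLK /=.
have [-> | ntK] := eqsVneq K 1; first exact: sub1G.
have ltK'K : K^`(1) \proper K := sol_der1_proper solK (subxx K) ntK.
have sK'L : K^`(1) \subset L.
  rewrite -(IHn K^`(1)%G) ?(subset_trans (der_sub 1 K) sKG) ?acts_der1 //.
  - by apply/genS/bigcupsP=> e E'e; rewrite (bigcup_max e) ?setSI ?der_sub.
  - by rewrite -ltnS (leq_trans _ leKn) // ltnS proper_card.
  exact: solvableS (der_sub 1 K) solK.
have nLK : K \subset 'N(L) := normal_norm (sub_der1_normal sK'L sLK).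
have cEe e : e \in E -> E \subset 'C[e].
  by move=> Ee; rewrite -cent_cycle sub_abelian_cent ?cycle_subG.
have actsL : [acts E, on L | to].
  rewrite /L; apply: acts_gen.
    by apply/bigcupsP=> e _; rewrite subIset ?sKG.
  apply: acts_bigcup => // e /setD1P[_ Ee].
  exact: acts_gacent1 (subsetP sEA e Ee) (cEe e Ee) actsK.
apply: (fixfree_quotient_sub Ep2E) => // e y E'e.
have Ee : e \in E by case/setD1P: E'e.
have sCeE : <[e]> \subset E by rewrite cycle_subG.
apply: good_fixfree_quotient (subsetP sEA e Ee) sKG (subset_trans sCeE actsK)
  (subset_trans sCeE actsL) nLK _.
by apply/sub_gen/(bigcup_max e).
Qed.

Section CentralizersOfRankTwoSubgroups.

Variables (p : nat) (A0 : {group aT}).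
Hypotheses (p_pr : prime p) (Ep3A0 : A0 \in 'E_p^3(A)).

Let W := <<\bigcup_(U in 'E_p^2(A0)) 'C_(G | to)(U)>>.

Lemma good_gacent1_sub_p2Elem_gen e :
  solvable G -> e \in A0^# -> 'C_(G | to)[e] \subset W.
Proof.
move=> solG A0'e; have [sA0A abelA0 oA0] := pnElemPcard Ep3A0.
have [nte A0e] := setD1P A0'e; have Ae := subsetP sA0A e A0e.
have sEA0 : <[e]> \subset A0 by rewrite cycle_subG.
have /splitsP[F /complP[tiEF defA0]] := abelem_splits abelA0 sEA0.
have sFA0 : F \subset A0 by rewrite -defA0 mulG_subr.
have Ep2F : F \in 'E_p^2(A).
  rewrite pnElemE // !inE (subset_trans sFA0 sA0A) (abelemS sFA0 abelA0) /=.
  have := TI_cardMg tiEF; rewrite defA0 oA0 -orderE (abelem_order_p abelA0 A0e nte).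
  by rewrite expnS => /eqP; rewrite eqn_pmul2l ?prime_gt0 // eq_sym.
have cFe : F \subset 'C[e].
  by rewrite -cent_cycle (sub_abelian_cent2 (abelem_abelian abelA0)).
rewrite -(good_gen_gacent1 (K := 'C_(G | to)[e]%G) Ep2F) ?subsetIl //; first last.
- exact: solvableS (subsetIl _ _) solG.
- by apply: acts_gacent1 Ae cFe _; rewrite astabs_range (subset_trans sFA0).
apply/genS/bigcupsP=> f /setD1P[ntf Ff].
have e'f : f \notin <[e]>.
  apply: contraNN ntf => Ef; have: f \in <[e]> :&: F by rewrite inE Ef.
  by rewrite tiEF inE.
have A0f : f \in A0 := subsetP sFA0 f Ff; have Af := subsetP sA0A f A0f.
apply: (bigcup_max (<[e]> <*> <[f]>)%G); first exact: join_cycle_p2Elem.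
by rewrite gacentY ?cycle_subG // !gacent_cycle // -setIA.
Qed.

Lemma abelian_p2Elem_gen :
  (forall a, a \in A^# -> abelian 'C_(G | to)[a]) -> abelian W.
Proof.
move=> cCC; have [sA0A _ oA0] := pnElemPcard Ep3A0.
rewrite abelian_gen; apply/bigcupsP=> U EpU; rewrite centsC; apply/bigcupsP=> V EpV.
have [g UVg ntg] := trivgPn _ (p2Elem_meet p_pr oA0 EpU EpV).
have [Ug Vg] := setIP UVg; have [sUA0 _ _] := pnElemP EpU.
have A'g : g \in A^# by rewrite !inE ntg (subsetP sA0A) ?(subsetP sUA0).
have sCg (X : {set aT}) : g \in X -> 'C_(G | to)(X) \subset 'C_(G | to)[g].
  by move=> Xg; rewrite setIS // gacentS // sub1set.
exact: sub_abelian_cent2 (cCC g A'g) (sCg V Vg) (sCg U Ug).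
Qed.

End CentralizersOfRankTwoSubgroups.

End Good.

End GroupActionFacts.

Theorem lemma3p1 (aT gT : finGroupType) (p : nat) (A : {group aT}) (G : {group gT})
    (to : groupAction A G) :
  prime p -> p.-abelem A -> (p ^ 3 <= #|A|)%N -> solvable G ->
  good_action to ->
  (forall a, a \in A^# -> abelian 'C_(G | to)[a]) ->
  abelian G.
Proof.
move=> p_pr abelA oA solG goodA cCC.
have [A0 Ep3A0] : exists A0, A0 \in 'E_p^3(A).
  apply: (abelem_pnElem abelA).
  by rewrite -(leq_exp2l 3 _ (prime_gt1 p_pr)) -(card_pgroup (abelem_pgroup abelA)).
have [sA0A abelA0 oA0] := pnElemPcard Ep3A0.
have [E Ep2E] : exists E, E \in 'E_p^2(A0).
  by apply: (abelem_pnElem abelA0); rewrite oA0 pfactorK.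
have [sEA0 _ _] := pnElemP Ep2E.
have Ep2EA : E \in 'E_p^2(A) := subsetP (pnElemS p 2 sA0A) E Ep2E.
have actsG : [acts E, on G | to] by rewrite astabs_range (subset_trans sEA0).
have defG := good_gen_gacent1 goodA Ep2EA (subxx G) actsG solG.
have /abelianS-> // : G \subset <<\bigcup_(e in E^#) 'C_(G | to)[e]>> by rewrite defG.
apply: abelianS (abelian_p2Elem_gen p_pr Ep3A0 cCC).
rewrite gen_subG; apply/bigcupsP=> e /setD1P[nte Ee].
rewrite (good_gacent1_sub_p2Elem_gen goodA p_pr Ep3A0 solG) //.
by rewrite !inE nte (subsetP sEA0).
Qed.
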